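(* Let $X$ be a nonempty set, $f:X\to X$ a function, and $\tau_2$ the fuzzy topology on $X$ defined below. Then $(X,\tau_2)$ is normal.
   Context: A fuzzy subset of $X$ is a function $\mu:X\to[0,1]$; union is the pointwise supremum, intersection the pointwise minimum, complement $1-\mu$; $\emptyset$ is the constant $0$ and $X$ the constant $1$. A fuzzy topology is a family of fuzzy subsets containing $\emptyset$ and $X$, closed under arbitrary unions and finite intersections; complements of open fuzzy sets are closed; the topology generated by a base $\mathbb{B}$ consists of $\emptyset$ and all unions of subfamilies of $\mathbb{B}$. $\mathbb{N}=\{1,2,\dots\}$, $f^0=\mathrm{id}_X$, $f^{n+1}=f^n\circ f$. Definition of $\tau_2$: $J_0=\bigcap_{n\in\mathbb{N}} f^n(X)$, $J_n=f^{n-1}(X)\setminus f^n(X)$ for $n\in\mathbb{N}$; for $m\in\mathbb{N}$, $\mu_{K_m}(x)=\min\{1,n/m\}$ if $x\in J_n$ with $n\ge1$, and $\mu_{K_m}(x)=1$ otherwise; $\tau_2$ is generated by the base $\{K_m:m\in\mathbb{N}\}$. The space is normal if for any two closed fuzzy sets $F,G$ with $F\cap G=\emptyset$ there exist open fuzzy sets $U,V$ with $F\subseteq U$, $G\subseteq V$ and $U\cap V=\emptyset$. *)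

(* fuzzy sets are functions X -> R with values in [0,1]. *)
From Stdlib Require Import Reals.
Open Scope R_scope.

Section Fuzzy.
Context {X : Type} (f : X -> X).

Definition in_img (n : nat) (x : X) : Prop := exists y, Nat.iter n f y = x.

(* J_n = f^{n-1}(X) \ f^n(X), for n >= 1 *)
Definition inJ (n : nat) (x : X) : Prop := in_img (n - 1) x /\ ~ in_img n x.

Definition is_K (m : nat) (mu : X -> R) : Prop :=
  forall x,
    (forall n, (1 <= n)%nat -> inJ n x -> mu x = Rmin 1 (INR n / INR m)) /\
    ((forall n, (1 <= n)%nat -> ~ inJ n x) -> mu x = 1).

Definition tau2_base (mu : X -> R) : Prop := exists m, (1 <= m)%nat /\ is_K m mu.

(* open sets of tau2: the empty fuzzy set, and all (pointwise-sup) unions of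
   nonempty subfamilies of the base *)
Definition tau2_open (mu : X -> R) : Prop :=
  (forall x, mu x = 0) \/
  exists F : (X -> R) -> Prop,
    (exists g, F g) /\ (forall g, F g -> tau2_base g) /\
    forall x, is_lub (fun r => exists g, F g /\ r = g x) (mu x).

Definition tau2_closed (mu : X -> R) : Prop := tau2_open (fun x => 1 - mu x).

Definition tau2_normal : Prop :=
  forall F G : X -> R,
    tau2_closed F -> tau2_closed G -> (forall x, Rmin (F x) (G x) = 0) ->
    exists U V : X -> R,
      tau2_open U /\ tau2_open V /\
      (forall x, F x <= U x) /\ (forall x, G x <= V x) /\
      (forall x, Rmin (U x) (V x) = 0).
End Fuzzy.

(* The base element K_1 is the constant 1, while every K_m with m >= 2 is at
   most 1/2 on J_1; if J_1 is empty then f is onto, every J_n is empty and all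
   K_m are the constant 1.  Hence an open set is 0, 1, or bounded by 1/2 on a
   nonempty J_1, and a closed set is 1, 0, or at least 1/2 on a nonempty J_1.
   Two disjoint closed sets cannot both be of the last kind, so one of them is
   empty, and the open sets 0 and 1 separate them. *)

From Stdlib Require Import Reals Lra Lia Classical.
From Corelib Require Import ssreflect.
Open Scope R_scope.

Section Tau2.
Set Implicit Arguments.
Context {X : Type} {f : X -> X}.

Lemma Rmin_1_INR_div1 (n : nat) : (1 <= n)%nat -> Rmin 1 (INR n / INR 1) = 1.
Proof.
  move=> Hn; apply: Rmin_left.
  rewrite /Rdiv Rinv_1 Rmult_1_r; exact: (le_INR 1).
Qed.

Lemma is_K_1_const : is_K f 1 (fun _ => 1).
Proof. by move=> x; split=> [n Hn _|_]; rewrite ?Rmin_1_INR_div1. Qed.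

Lemma is_K_1_eq (g : X -> R) : is_K f 1 g -> forall y, g y = 1.
Proof.
  move=> HK y; have [HJ Hnot] := HK y.
  case: (classic (exists n, (1 <= n)%nat /\ inJ f n y)) => [[n [Hn Hy]]|Hno].
  - by rewrite (HJ n Hn Hy) Rmin_1_INR_div1.
  - by apply: Hnot => n Hn Hy; apply: Hno; exists n.
Qed.

Lemma is_K_bounds (m : nat) (g : X -> R) :
  (1 <= m)%nat -> is_K f m g -> forall x, 0 <= g x <= 1.
Proof.
  move=> Hm HK x; have [HJ Hnot] := HK x.
  case: (classic (exists n, (1 <= n)%nat /\ inJ f n x)) => [[n [Hn Hx]]|Hno].
  - rewrite (HJ n Hn Hx); split; last exact: Rmin_l.
    apply: Rmin_glb; first lra.
    by apply: Rle_mult_inv_pos; [apply: pos_INR | apply: lt_0_INR; lia].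
  - have -> : g x = 1 by apply: Hnot => n Hn Hx; apply: Hno; exists n.
    lra.
Qed.

Lemma is_K_J1_le_half (m : nat) (g : X -> R) (x : X) :
  (2 <= m)%nat -> is_K f m g -> inJ f 1 x -> g x <= 1 / 2.
Proof.
  move=> Hm HK Hx; rewrite (proj1 (HK x) 1%nat (le_n 1) Hx).
  apply: Rle_trans (Rmin_r _ _) _.
  have H2m : 2 <= INR m by exact: (le_INR 2).
  rewrite /Rdiv !Rmult_1_l; apply: Rinv_le_contravar; lra.
Qed.

(* [inJ f 1 x] is [in_img f 0 x /\ ~ in_img f 1 x], so an empty J_1 means f is onto. *)
Lemma in_img_of_J1_empty :
  (forall x, ~ inJ f 1 x) -> forall n x, in_img f n x.
Proof.
  move=> HJ1; have Honto : forall x, in_img f 1 x.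
    by move=> x; apply: NNPP => Hx; apply: (HJ1 x); split=> //; exists x.
  elim=> [|n IHn] x; first by exists x.
  have [y <-] := Honto x; have [z <-] := IHn y; by exists z.
Qed.

Lemma tau2_base_cases (g : X -> R) : tau2_base f g ->
  (forall y, g y = 1) \/
  ((exists x, inJ f 1 x) /\ forall x, inJ f 1 x -> g x <= 1 / 2).
Proof.
  move=> [m [Hm HK]].
  case: (Nat.eq_dec m 1) => [Em | Hm2]; first by subst m; left; exact: is_K_1_eq.
  case: (classic (exists x, inJ f 1 x)) => [HJ1 | HJ1].
  - by right; split=> // x; apply: is_K_J1_le_half HK; lia.
  - left=> y; apply: (proj2 (HK y)) => n _ [_ Hy]; apply: Hy.
    by apply: in_img_of_J1_empty => x Hx; apply: HJ1; exists x.
Qed.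

Lemma tau2_open_bounds (mu : X -> R) : tau2_open f mu -> forall x, 0 <= mu x <= 1.
Proof.
  move=> [H0 | [F [[g Fg] [Fbase Hlub]]]] x; first by rewrite H0; lra.
  have [Hub Hleast] := Hlub x.
  have [m [Hm HK]] := Fbase g Fg.
  split.
  - apply: Rle_trans (proj1 (is_K_bounds Hm HK x)) _.
    by apply: Hub; exists g.
  - apply: Hleast => _ [h [Fh ->]].
    have [k [Hk HK']] := Fbase h Fh; exact: (proj2 (is_K_bounds Hk HK' x)).
Qed.

Lemma tau2_open_cases (mu : X -> R) : tau2_open f mu ->
  (forall y, mu y = 0) \/ (forall y, mu y = 1) \/
  ((exists x, inJ f 1 x) /\ forall x, inJ f 1 x -> mu x <= 1 / 2).
Proof.
  move=> Hmu; have Hbd := tau2_open_bounds Hmu.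
  case: Hmu => [H0 | [F [[g0 Fg0] [Fbase Hlub]]]]; first by left.
  right.
  case: (classic (exists g, F g /\ forall y, g y = 1)) => [[g [Fg Hg]] | Hno].
  - left=> y; have := proj2 (Hbd y).
    have : g y <= mu y by apply: (proj1 (Hlub y)); exists g.
    rewrite Hg; lra.
  - have Hsmall g : F g -> (exists x, inJ f 1 x) /\ forall x, inJ f 1 x -> g x <= 1 / 2.
      move=> Fg; case: (tau2_base_cases (Fbase g Fg)) => // Hg.
      by case: Hno; exists g.
    right; split; first exact: (proj1 (Hsmall g0 Fg0)).
    move=> x Hx; apply: (proj2 (Hlub x)) => _ [g [Fg ->]].
    exact: (proj2 (Hsmall g Fg)).
Qed.

Lemma tau2_closed_cases (F : X -> R) : tau2_closed f F ->
  (forall y, F y = 1) \/ (forall y, F y = 0) \/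
  ((exists x, inJ f 1 x) /\ forall x, inJ f 1 x -> 1 / 2 <= F x).
Proof.
  move=> /tau2_open_cases [H | [H | [HJ1 H]]].
  - by left=> y; have := H y; lra.
  - by right; left=> y; have := H y; lra.
  - by right; right; split=> // x /H; lra.
Qed.

Lemma tau2_closed_le1 (F : X -> R) : tau2_closed f F -> forall x, F x <= 1.
Proof. by move=> /tau2_open_bounds HF x; have := HF x; lra. Qed.

Lemma tau2_closed_disjoint_empty (F G : X -> R) :
  tau2_closed f F -> tau2_closed f G -> (forall x, Rmin (F x) (G x) = 0) ->
  (forall y, F y = 0) \/ (forall y, G y = 0).
Proof.
  move=> HF HG Hdisj.
  have HG1 := tau2_closed_le1 HG; have HF1 := tau2_closed_le1 HF.
  case: (tau2_closed_cases HF) => [F1 | [F0 | [[x Hx] HFJ]]];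
    [by right=> y; rewrite -(Hdisj y) F1 Rmin_right | by left |].
  case: (tau2_closed_cases HG) => [G1 | [G0 | [_ HGJ]]].
  - by left=> y; rewrite -(Hdisj y) G1 Rmin_left.
  - by right.
  - have := Rmin_glb _ _ _ (HFJ x Hx) (HGJ x Hx); rewrite Hdisj; lra.
Qed.

Lemma tau2_open_full : tau2_open f (fun _ => 1).
Proof.
  right; exists (eq (fun _ => 1)).
  split; first by exists (fun _ => 1).
  split; first by move=> _ <-; exists 1%nat; split=> //; exact: is_K_1_const.
  move=> x; split=> [_ [_ [<- ->]] | b Hb]; first exact: Rle_refl.
  by apply: Hb; exists (fun _ => 1).
Qed.

End Tau2.

Theorem proposition3p11 (X : Type) (x0 : X) (f : X -> X) :
  @tau2_normal X f.
Proof.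
  move=> F G HF HG Hdisj.
  have [F1 G1] := (tau2_closed_le1 HF, tau2_closed_le1 HG).
  case: (tau2_closed_disjoint_empty HF HG Hdisj) => [F0 | G0].
  - exists (fun _ => 0), (fun _ => 1); split; first by left.
    split; first exact: tau2_open_full.
    split; first by move=> x; rewrite F0; lra.
    by split=> // x; apply: Rmin_left; lra.
  - exists (fun _ => 1), (fun _ => 0); split; first exact: tau2_open_full.
    split; first by left.
    split=> //; split; first by move=> x; rewrite G0; lra.
    by move=> x; apply: Rmin_right; lra.
Qed.
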